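(* Consider the spherical mean curvature flow $M_t=M_{y(t)}$, $y(t)=e^{i\theta(t)}$, $\theta(0)=\theta_0$, of isoparametric hypersurfaces with $g$ distinct principal curvatures and multiplicity data $m_1\le m_2$, and let $\phi(t)=\|A(t)\|^2-\frac{1}{n}H^2(t)$. Then for all $t\le0$: (1) If $\delta=0$ (so $\theta_{\min}=\pi/(2g)$), then for every $0<\epsilon<1$ there is $c_0>0$ such that if $\theta_0\in(\frac{\pi}{2g}-c_0,\frac{\pi}{2g}+c_0)$ then $(g-1)n\le\phi(t)\le(g-1+\epsilon)n$. (2) If $\delta>0$ (so $g\in\{2,4\}$), then for every $0<\epsilon<1$ there is $c_0>0$ such that: (a) if $\theta_0\in(\theta_{\min}-c_0,\theta_{\min})$ then $(g-1-\epsilon)n\le\phi(t)\le(g-1)n$; (b) if $\theta_0\in(\theta_{\min},\theta_{\min}+c_0)$ then $(g-1)n\le\phi(t)\le(g-1+\epsilon)n$.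
   Context: Let $M^n$ be a compact isoparametric hypersurface in the unit sphere $S^{n+1}\subset\mathbb{R}^{n+2}$ (constant principal curvatures) with $g$ distinct principal curvatures; then $g\in\{1,2,3,4,6\}$. Fix $x_0\in M$ and identify the 2-dimensional normal space $\nu_{x_0}M$ of $M$ in $\mathbb{R}^{n+2}$ with $\mathbb{C}$ so that the two focal submanifolds $M_+$, $M_-$ ($\dim M_+\le\dim M_-$) meet the normal circle at $1$ and $e^{i\pi/g}$ (the intersection points closest to $x_0$). The Weyl chamber is $C=\{re^{i\theta}:r>0,\ 0<\theta<\pi/g\}$. For $k=1,\dots,g$ let $\theta_k=k\pi/g-\pi/2$, $\alpha_k=e^{i\theta_k}$, and $m_k=m_1$ for $k$ odd, $m_k=m_2$ for $k$ even, where $(m_1,m_2)$, $m_1\le m_2$, is the multiplicity data of the principal curvatures; $m_1=m_2$ if $g$ is odd, and $(m_1+m_2)g=2n$. For $x\in C$, $M_x=\{p+\tilde\xi(p):p\in M\}$ where $\tilde\xi$ is the parallel normal field on $M$ with $\tilde\xi(x_0)=x-x_0$; it is an $n$-dimensional isoparametric submanifold of $\mathbb{R}^{n+2}$ lying in $S^{n+1}(|x|)$, with normal space $\nu_{x_0}M$ at $x$, and $T_xM_x=\oplus_kE_k$, $\dim E_k=m_k$, with Euclidean shape operator $A_\xi|_{E_k}=\langle\xi,-\alpha_k/\langle x,\alpha_k\rangle\rangle\mathrm{Id}$ ($\langle\cdot,\cdot\rangle$ the real inner product on $\mathbb{C}=\mathbb{R}^2$). $H^E(x),A^E(x)$ denote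 mean curvature vector and shape operator of $M_x$ at $x$ in $\mathbb{R}^{n+2}$; $H^S(x),A^S(x)$ those of $M_x$ as a hypersurface of $S^{n+1}(|x|)$; $\|A\|^2$ is the sum of squared Hilbert–Schmidt norms over an orthonormal normal basis. Set $\delta=(m_2-m_1)/(m_2+m_1)$ if $g\ge2$ and $\delta=0$ if $g=1$, and let $\theta_{\min}\in(0,\pi/g)$ be defined by $\cos g\theta_{\min}=-\delta$. The spherical MCF of $M_{y(0)}$ is the family $M_t=M_{y(t)}$ with $y(t)\in C$ unit and $y'(t)=H^S(y(t))$; it exists for all $t\le0$; $A(t)=A^S(y(t))$ and $H^2(t)=\|H^S(y(t))\|^2$. *)

From Stdlib Require Import Reals Lra Arith.
Open Scope R_scope.

(* Vectors of R^2 = C, with the real inner product. *)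
Definition ip (u v : R * R) : R := fst u * fst v + snd u * snd v.
Definition nrm (u : R * R) : R := sqrt (ip u u).
Definition scal (a : R) (u : R * R) : R * R := (a * fst u, a * snd u).

Fixpoint sumk (f : nat -> R) (g : nat) : R :=
  match g with O => 0 | S p => sumk f p + f (S p) end.

Definition thk (g k : nat) : R := INR k * PI / INR g - PI / 2.
Definition alpha (g k : nat) : R * R := (cos (thk g k), sin (thk g k)).

Definition mult (m1 m2 k : nat) : nat := if Nat.odd k then m1 else m2.

Definition ndim (g m1 m2 : nat) : R := INR ((m1 + m2) * g) / 2.

(* eigenvalue of the Euclidean shape operator A_xi on E_k of M_x at x:
   < xi , - alpha_k / <x, alpha_k> > *)
Definition lamE (g : nat) (x xi : R * R) (k : nat) : R :=
  ip xi (scal (- / ip x (alpha g k)) (alpha g k)).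

(* unit normal of M_x inside the sphere S^{n+1}(|x|): the unit vector of the
   normal plane orthogonal to x (i x / |x|). *)
Definition sph_normal (x : R * R) : R * R := scal (/ nrm x) (- snd x, fst x).

(* trace of A^S(x) = A^E_xi restricted, xi the spherical unit normal *)
Definition trAS (g m1 m2 : nat) (x : R * R) : R :=
  sumk (fun k => INR (mult m1 m2 k) * lamE g x (sph_normal x) k) g.

Definition HS (g m1 m2 : nat) (x : R * R) : R * R :=
  scal (trAS g m1 m2 x) (sph_normal x).

Definition normAS2 (g m1 m2 : nat) (x : R * R) : R :=
  sumk (fun k => INR (mult m1 m2 k) * (lamE g x (sph_normal x) k) ^ 2) g.

Definition HS2 (g m1 m2 : nat) (x : R * R) : R := ip (HS g m1 m2 x) (HS g m1 m2 x).

Definition phi (g m1 m2 : nat) (x : R * R) : R :=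
  normAS2 g m1 m2 x - HS2 g m1 m2 x / ndim g m1 m2.

Definition delta (g m1 m2 : nat) : R :=
  if (2 <=? g)%nat then (INR m2 - INR m1) / (INR m2 + INR m1) else 0.

Definition isop_data (g m1 m2 : nat) : Prop :=
  (g = 1 \/ g = 2 \/ g = 3 \/ g = 4 \/ g = 6)%nat /\
  (1 <= m1)%nat /\ (m1 <= m2)%nat /\
  (Nat.odd g = true -> m1 = m2) /\
  (g = 6%nat -> m1 = m2).

Definition yof (th : R -> R) (t : R) : R * R := (cos (th t), sin (th t)).

(* th describes the spherical MCF y(t) = e^{i th(t)} for t <= 0:
   y(t) lies in the Weyl chamber and y'(t) = H^S(y(t)). *)
Definition is_sph_MCF (g m1 m2 : nat) (th : R -> R) : Prop :=
  forall t, t <= 0 ->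
    0 < th t < PI / INR g /\
    derivable_pt_lim (fun s => cos (th s)) t (fst (HS g m1 m2 (yof th t))) /\
    derivable_pt_lim (fun s => sin (th s)) t (snd (HS g m1 m2 (yof th t))).

(* Write [y = e^{i theta}].  The principal curvatures of [M_y] are [cot (k pi / g - theta)], and the
   classical cotangent sums give [H = - n (cos g theta + delta) / sin g theta] and
   [phi sin^2 g theta = n ((g - 1) + (g - 2) delta cos g theta - delta^2)].  Hence
   [u = cos g theta + delta] solves [u' = g n u] along the flow, so for [t <= 0] it keeps its sign and
   only shrinks, while [phi - (g - 1) n = n u ((g - 1) u - g delta) / sin^2 g theta].  Since
   [cos (g theta_min) = - delta], starting close to [theta_min] (to [pi / 2g] when [delta = 0]) keeps
   [u] small, which pinches [phi] near [(g - 1) n] on the side given by the sign of [u (0)]. *)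

From Stdlib Require Import Reals Lra Nsatz Lia.
Open Scope R_scope.

(* [(c + i s) ^ k], as a pair of reals. *)
Fixpoint rot_pow (k : nat) (c s : R) : R * R :=
  match k with
  | O => (1, 0)
  | S p => let q := rot_pow p c s in (fst q * c - snd q * s, snd q * c + fst q * s)
  end.

Lemma rot_pow_cos_sin k x : rot_pow k (cos x) (sin x) = (cos (INR k * x), sin (INR k * x)).
Proof.
  induction k as [|k IH]; simpl rot_pow.
  - now rewrite Rmult_0_l, cos_0, sin_0.
  - rewrite IH, S_INR, Rmult_plus_distr_r, Rmult_1_l, cos_plus, sin_plus.
    simpl; f_equal; ring.
Qed.

Lemma cos_mul_rot_pow k x : cos (INR k * x) = fst (rot_pow k (cos x) (sin x)).
Proof. now rewrite rot_pow_cos_sin. Qed.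

Lemma sin_mul_rot_pow k x : sin (INR k * x) = snd (rot_pow k (cos x) (sin x)).
Proof. now rewrite rot_pow_cos_sin. Qed.

Lemma derivable_pt_lim_eq f x l l' : l = l' -> derivable_pt_lim f x l -> derivable_pt_lim f x l'.
Proof. now intros ->. Qed.

Lemma derivable_pt_lim_rot_pow k (c s : R -> R) t T :
  derivable_pt_lim c t (- (T * s t)) -> derivable_pt_lim s t (T * c t) ->
  derivable_pt_lim (fun u => fst (rot_pow k (c u) (s u))) t (- INR k * snd (rot_pow k (c t) (s t)) * T) /\
  derivable_pt_lim (fun u => snd (rot_pow k (c u) (s u))) t (INR k * fst (rot_pow k (c t) (s t)) * T).
Proof.
  intros Dc Ds; induction k as [|k [IH1 IH2]]; simpl rot_pow; simpl fst; simpl snd.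
  - split; apply (derivable_pt_lim_eq _ _ 0); try (simpl INR; ring); apply derivable_pt_lim_const.
  - rewrite S_INR; split.
    + eapply derivable_pt_lim_eq, derivable_pt_lim_minus;
        [| apply derivable_pt_lim_mult; eassumption | apply derivable_pt_lim_mult; eassumption].
      cbv beta; ring.
    + eapply derivable_pt_lim_eq, derivable_pt_lim_plus;
        [| apply derivable_pt_lim_mult; eassumption | apply derivable_pt_lim_mult; eassumption].
      cbv beta; ring.
Qed.

Lemma cos_sin_sq x : cos x * cos x + sin x * sin x = 1.
Proof. pose proof (sin2_cos2 x). unfold Rsqr in *. lra. Qed.

Lemma cos_lipschitz a b : Rabs (cos a - cos b) <= Rabs (a - b).
Proof.
  assert (Hlt : forall p q, p < q -> Rabs (cos p - cos q) <= Rabs (p - q)).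
  { intros p q Hpq.
    destruct (MVT_cor2 cos (fun y => - sin y) p q Hpq) as [c [Hc _]];
      [intros; apply derivable_pt_lim_cos |].
    rewrite Rabs_minus_sym, Hc, Rabs_mult, (Rabs_minus_sym p q).
    pose proof (SIN_bound c); pose proof (Rabs_pos (q - p)).
    assert (Rabs (- sin c) <= 1) by (apply Rabs_le; lra).
    nra. }
  destruct (Rtotal_order a b) as [Hab | [-> | Hab]].
  - now apply Hlt.
  - rewrite !Rminus_diag, Rabs_R0; lra.
  - rewrite Rabs_minus_sym, (Rabs_minus_sym a b); now apply Hlt.
Qed.

Lemma linear_ode_backward (u : R -> R) K :
  (forall s, s <= 0 -> derivable_pt_lim u s (K * u s)) ->
  forall t, t <= 0 -> u t = u 0 * exp (K * t).
Proof.
  intros Du t Ht.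
  set (w := fun s => u s * exp (- K * s)).
  assert (Dw : forall s, s <= 0 -> derivable_pt_lim w s 0).
  { intros s Hs.
    assert (De : derivable_pt_lim (fun s => exp (- K * s)) s (exp (- K * s) * - K)).
    { apply (derivable_pt_lim_comp (fun s => - K * s) exp s).
      - eapply derivable_pt_lim_eq, derivable_pt_lim_scal, derivable_pt_lim_id. ring.
      - apply derivable_pt_lim_exp. }
    eapply derivable_pt_lim_eq, derivable_pt_lim_mult; [| apply Du, Hs | exact De].
    cbv beta; ring. }
  assert (Hw : w t = w 0).
  { destruct (Req_dec t 0) as [-> | Hne]; [reflexivity |].
    destruct (MVT_cor2 w (fun _ => 0) t 0) as [c [Hc _]]; [lra | intros c Hc; apply Dw; lra | lra]. }
  unfold w in Hw; rewrite Rmult_0_r, exp_0, Rmult_1_r in Hw.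
  rewrite <- Hw, Rmult_assoc, <- exp_plus.
  replace (- K * t + K * t) with 0 by ring; rewrite exp_0; ring.
Qed.

Lemma exp_le_1 x : x <= 0 -> exp x <= 1.
Proof.
  intros Hx; rewrite <- exp_0.
  destruct (Req_dec x 0) as [-> | Hne]; [lra | left; apply exp_increasing; lra].
Qed.

Lemma cos_scaled_close G a b c : 0 <= G <= 6 -> Rabs (b - a) < c ->
  - (6 * c) < cos (G * b) - cos (G * a) < 6 * c.
Proof.
  intros HG Hba; pose proof (cos_lipschitz (G * b) (G * a)) as Hlip.
  rewrite <- Rmult_minus_distr_l, Rabs_mult, (Rabs_pos_eq G) in Hlip by lra.
  pose proof (Rabs_pos (b - a)).
  assert (Hlt : Rabs (cos (G * b) - cos (G * a)) < 6 * c) by nra.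
  apply Rabs_def2 in Hlt; lra.
Qed.

Lemma sumk_mult m1 m2 (f : nat -> R) g :
  sumk (fun k => INR (mult m1 m2 k) * f k) g =
  INR m1 * sumk (fun k => if Nat.odd k then f k else 0) g +
  INR m2 * sumk (fun k => if Nat.odd k then 0 else f k) g.
Proof.
  induction g as [|g IH]; simpl sumk; [ring |].
  rewrite IH; unfold mult; destruct (Nat.odd (S g)); ring.
Qed.

Lemma sumk_mult_same m (f : nat -> R) g :
  sumk (fun k => INR (mult m m k) * f k) g = INR m * sumk f g.
Proof.
  induction g as [|g IH]; simpl sumk; [ring |].
  rewrite IH; unfold mult; destruct (Nat.odd (S g)); ring.
Qed.

Lemma ndim_eq g m1 m2 : ndim g m1 m2 = (INR m1 + INR m2) * (INR g / 2).
Proof. unfold ndim; rewrite mult_INR, plus_INR; field. Qed.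

Lemma delta_eq g m1 m2 : (2 <= g)%nat -> (1 <= m1)%nat ->
  delta g m1 m2 * (INR m2 + INR m1) = INR m2 - INR m1.
Proof.
  intros Hg Hm; unfold delta.
  replace (2 <=? g)%nat with true by (symmetry; apply Nat.leb_le; lia).
  assert (1 <= INR m1) by (apply (le_INR 1); lia); pose proof (pos_INR m2).
  field; lra.
Qed.

Lemma delta_same g m : delta g m m = 0.
Proof. unfold delta; destruct (2 <=? g)%nat; [unfold Rdiv; ring | reflexivity]. Qed.

Lemma isop_data_g_bounds g m1 m2 : isop_data g m1 m2 -> 1 <= INR g <= 6.
Proof. intros [Hg _]; destruct Hg as [-> | [-> | [-> | [-> | ->]]]]; simpl; lra. Qed.

Lemma ndim_pos g m1 m2 : isop_data g m1 m2 -> 0 < ndim g m1 m2.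
Proof.
  intros Hd; pose proof (isop_data_g_bounds _ _ _ Hd); destruct Hd as [_ [Hm1 _]].
  assert (1 <= INR m1) by (apply (le_INR 1); lia); pose proof (pos_INR m2).
  rewrite ndim_eq; nra.
Qed.

Lemma delta_bounds g m1 m2 : isop_data g m1 m2 -> 0 <= delta g m1 m2 < 1.
Proof.
  intros [_ [Hm1 [Hm12 _]]]; unfold delta.
  assert (1 <= INR m1) by (apply (le_INR 1); lia).
  assert (INR m1 <= INR m2) by (apply le_INR; lia).
  destruct (2 <=? g)%nat; [| lra].
  assert ((INR m2 - INR m1) / (INR m2 + INR m1) * (INR m2 + INR m1) = INR m2 - INR m1)
    by (field; lra).
  nra.
Qed.

Lemma nrm_cos_sin x : nrm (cos x, sin x) = 1.
Proof. unfold nrm, ip; simpl. now rewrite cos_sin_sq, sqrt_1. Qed.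

Definition pc (g : nat) (x : R) (k : nat) : R :=
  lamE g (cos x, sin x) (sph_normal (cos x, sin x)) k.

Lemma pc_formula g x k :
  pc g x k = (sin x * cos (thk g k) - cos x * sin (thk g k)) / (cos x * cos (thk g k) + sin x * sin (thk g k)).
Proof.
  unfold pc, lamE, sph_normal, alpha, ip, scal; rewrite nrm_cos_sin, Rinv_1; simpl.
  unfold Rdiv; ring.
Qed.

Lemma chamber_scaled g x : (0 < g)%nat -> 0 < x < PI / INR g -> 0 < INR g * x < PI.
Proof.
  intros Hg Hx; assert (0 < INR g) by (apply lt_0_INR; lia).
  assert (INR g * (PI / INR g) = PI) by (field; lra).
  nra.
Qed.

Lemma cos_scaled_lt g a b : (0 < g)%nat -> 0 < a < PI / INR g -> 0 < b < PI / INR g -> a < b ->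
  cos (INR g * b) < cos (INR g * a).
Proof.
  intros Hg Ha Hb Hab; apply chamber_scaled in Ha, Hb; auto.
  assert (0 < INR g) by (apply lt_0_INR; lia).
  apply cos_decreasing_1; nra.
Qed.

Lemma chamber_denom_neq0 g k x : (1 <= k <= g)%nat -> 0 < x < PI / INR g ->
  cos x * cos (thk g k) + sin x * sin (thk g k) <> 0.
Proof.
  intros Hk Hx.
  assert (Hg : 0 < INR g) by (apply lt_0_INR; lia).
  assert (1 <= INR k <= INR g) by (split; [apply (le_INR 1) | apply le_INR]; lia).
  set (q := PI / INR g) in *.
  assert (INR g * q = PI) by (unfold q; field; lra).
  rewrite <- cos_minus; unfold thk.
  replace (x - (INR k * PI / INR g - PI / 2)) with (x - INR k * q + PI / 2) by (unfold q; field; lra).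
  rewrite cos_plus, cos_PI2, sin_PI2.
  assert (sin (x - INR k * q) < 0) by (apply sin_lt_0_var; nra).
  lra.
Qed.

Ltac expand_pc_sums g x Hx :=
  let rec denominators k := lazymatch k with
    | O => idtac
    | S ?p => pose proof (chamber_denom_neq0 g k x ltac:(lia) Hx); denominators p
    end in
  denominators g; cbv zeta; cbn [sumk Nat.odd Nat.even negb]; rewrite !pc_formula.

(* Replaces each inverse [/ D] by a fresh [w] with [/ D * D = 1], so that [nsatz] sees polynomials. *)
Ltac name_inverses :=
  repeat match goal with |- context [/ ?D] =>
    let w := fresh "w" in
    assert (/ D * D = 1) by (apply Rinv_l; first [assumption | lra]);
    set (w := / D) in *; clearbody w
  end.

Ltac solve_pc_sums x :=
  rewrite ?cos_neg, ?sin_neg, ?cos_0, ?sin_0, ?cos_PI2, ?sin_PI2, ?cos_PI4, ?sin_PI4,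
    ?cos_PI6, ?sin_PI6, ?cos_PI3, ?sin_PI3 in *;
  rewrite cos_mul_rot_pow, sin_mul_rot_pow, ?S_INR, INR_0;
  pose proof (cos_sin_sq x);
  set (c := cos x) in *; set (s := sin x) in *; clearbody c s;
  cbn [rot_pow fst snd]; unfold Rdiv in *;
  name_inverses;
  (* [nsatz] does not handle [^] *)
  cbn [pow]; repeat split; nsatz.

(* Since [pc g x k = cot (k pi / g - x)], these are the classical sums of [cot] and [cot^2] over
   angles in arithmetic progression, e.g. [sum_k cot (k pi / g - x) = - g cot (g x)], taken over all
   [k] or over the [k] of each parity. *)
Definition pc_power_sums (g : nat) (x : R) : Prop :=
  let G := INR g in let C := cos (G * x) in let S := sin (G * x) in
  sumk (pc g x) g * S = - G * C /\
  sumk (fun k => pc g x k ^ 2) g * S ^ 2 = G * (G - 1) + G * C ^ 2.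

Definition pc_power_sums_by_parity (g : nat) (x : R) : Prop :=
  let G := INR g in let C := cos (G * x) in let S := sin (G * x) in
  sumk (fun k => if Nat.odd k then pc g x k else 0) g * S = G / 2 * (1 - C) /\
  sumk (fun k => if Nat.odd k then 0 else pc g x k) g * S = - (G / 2) * (1 + C) /\
  sumk (fun k => if Nat.odd k then pc g x k ^ 2 else 0) g * S ^ 2 =
    G / 2 * ((G - 2) * (1 - C) + (1 - C) ^ 2) /\
  sumk (fun k => if Nat.odd k then 0 else pc g x k ^ 2) g * S ^ 2 =
    G / 2 * ((G - 2) * (1 + C) + (1 + C) ^ 2).

Lemma pc_power_sums_1 x : 0 < x < PI / INR 1 -> pc_power_sums 1 x.
Proof.
  intros Hx; unfold pc_power_sums; expand_pc_sums 1%nat x Hx.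
  replace (thk 1 1) with (PI / 2) in * by (unfold thk; simpl; field).
  solve_pc_sums x.
Qed.

Lemma pc_power_sums_2 x : 0 < x < PI / INR 2 -> pc_power_sums_by_parity 2 x.
Proof.
  intros Hx; unfold pc_power_sums_by_parity; expand_pc_sums 2%nat x Hx.
  replace (thk 2 1) with 0 in * by (unfold thk; simpl; field).
  replace (thk 2 2) with (PI / 2) in * by (unfold thk; simpl; field).
  solve_pc_sums x.
Qed.

Lemma pc_power_sums_3 x : 0 < x < PI / INR 3 -> pc_power_sums 3 x.
Proof.
  intros Hx; unfold pc_power_sums; expand_pc_sums 3%nat x Hx.
  replace (thk 3 1) with (- (PI / 6)) in * by (unfold thk; simpl; field).
  replace (thk 3 2) with (PI / 6) in * by (unfold thk; simpl; field).
  replace (thk 3 3) with (PI / 2) in * by (unfold thk; simpl; field).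
  pose proof (sqrt_sqrt 3 ltac:(lra)).
  solve_pc_sums x.
Qed.

Lemma pc_power_sums_4 x : 0 < x < PI / INR 4 -> pc_power_sums_by_parity 4 x.
Proof.
  intros Hx; unfold pc_power_sums_by_parity; expand_pc_sums 4%nat x Hx.
  replace (thk 4 1) with (- (PI / 4)) in * by (unfold thk; simpl; field).
  replace (thk 4 2) with 0 in * by (unfold thk; simpl; field).
  replace (thk 4 3) with (PI / 4) in * by (unfold thk; simpl; field).
  replace (thk 4 4) with (PI / 2) in * by (unfold thk; simpl; field).
  pose proof (sqrt_sqrt 2 ltac:(lra)).
  assert (sqrt 2 <> 0) by (apply Rgt_not_eq, sqrt_lt_R0; lra).
  solve_pc_sums x.
Qed.

Lemma pc_power_sums_6 x : 0 < x < PI / INR 6 -> pc_power_sums 6 x.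
Proof.
  intros Hx; unfold pc_power_sums; expand_pc_sums 6%nat x Hx.
  replace (thk 6 1) with (- (PI / 3)) in * by (unfold thk; simpl; field).
  replace (thk 6 2) with (- (PI / 6)) in * by (unfold thk; simpl; field).
  replace (thk 6 3) with 0 in * by (unfold thk; simpl; field).
  replace (thk 6 4) with (PI / 6) in * by (unfold thk; simpl; field).
  replace (thk 6 5) with (PI / 3) in * by (unfold thk; simpl; field).
  replace (thk 6 6) with (PI / 2) in * by (unfold thk; simpl; field).
  pose proof (sqrt_sqrt 3 ltac:(lra)).
  solve_pc_sums x.
Qed.

(* [T] is the mean curvature [H^S]; these are the formulas for [H] and [n |A|^2 - H^2] at
   [y = e^{ix}], with the denominator [sin (g x)] cleared. *)
Definition shape_identities (g m1 m2 : nat) (x : R) : Prop :=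
  let n := ndim g m1 m2 in let d := delta g m1 m2 in
  let C := cos (INR g * x) in let S := sin (INR g * x) in
  let T := trAS g m1 m2 (cos x, sin x) in
  T * S = - n * (C + d) /\
  (n * normAS2 g m1 m2 (cos x, sin x) - T ^ 2) * S ^ 2 =
    n ^ 2 * (INR g - 1 + (INR g - 2) * d * C - d ^ 2).

Lemma shape_of_parity_sums (G a b d n P Q U V S C : R) :
  d * (b + a) = b - a -> n = (a + b) * (G / 2) ->
  P * S = G / 2 * (1 - C) -> Q * S = - (G / 2) * (1 + C) ->
  U * S ^ 2 = G / 2 * ((G - 2) * (1 - C) + (1 - C) ^ 2) ->
  V * S ^ 2 = G / 2 * ((G - 2) * (1 + C) + (1 + C) ^ 2) ->
  (a * P + b * Q) * S = - n * (C + d) /\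
  (n * (a * U + b * V) - (a * P + b * Q) ^ 2) * S ^ 2 =
    n ^ 2 * (G - 1 + (G - 2) * d * C - d ^ 2).
Proof. intros Hd -> HP HQ HU HV; cbn [pow] in *; unfold Rdiv in *; split; nsatz. Qed.

Lemma shape_of_sums (G a d n L W S C : R) :
  d = 0 -> n = a * G -> L * S = - G * C -> W * S ^ 2 = G * (G - 1) + G * C ^ 2 ->
  (a * L) * S = - n * (C + d) /\
  (n * (a * W) - (a * L) ^ 2) * S ^ 2 = n ^ 2 * (G - 1 + (G - 2) * d * C - d ^ 2).
Proof. intros -> -> HL HW; cbn [pow] in *; split; nsatz. Qed.

Lemma shape_identities_hold g m1 m2 x : isop_data g m1 m2 -> 0 < x < PI / INR g ->
  shape_identities g m1 m2 x.
Proof.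
  intros Hd Hx; unfold shape_identities, trAS, normAS2.
  destruct Hd as [Hg [Hm1 [_ [Hodd H6]]]].
  destruct Hg as [-> | [-> | [-> | [-> | ->]]]];
    [ rewrite <- Hodd by reflexivity; destruct (pc_power_sums_1 x Hx) as [HL HW]
    | destruct (pc_power_sums_2 x Hx) as [HP [HQ [HU HV]]]
    | rewrite <- Hodd by reflexivity; destruct (pc_power_sums_3 x Hx) as [HL HW]
    | destruct (pc_power_sums_4 x Hx) as [HP [HQ [HU HV]]]
    | rewrite <- H6 by reflexivity; destruct (pc_power_sums_6 x Hx) as [HL HW] ];
    first
    [ rewrite !sumk_mult_same;
      apply shape_of_sums with (G := INR _); [apply delta_same | rewrite ndim_eq; field | exact HL | exact HW]
    | rewrite !sumk_mult;
      apply shape_of_parity_sums with (G := INR _) (P := sumk _ _) (Q := sumk _ _);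
      [apply delta_eq; lia | apply ndim_eq | exact HP | exact HQ | exact HU | exact HV] ].
Qed.

Lemma HS_cos_sin g m1 m2 x :
  HS g m1 m2 (cos x, sin x) = (- (trAS g m1 m2 (cos x, sin x) * sin x), trAS g m1 m2 (cos x, sin x) * cos x).
Proof. unfold HS, sph_normal, scal; rewrite nrm_cos_sin, Rinv_1; simpl; f_equal; ring. Qed.

Lemma HS2_cos_sin g m1 m2 x : HS2 g m1 m2 (cos x, sin x) = trAS g m1 m2 (cos x, sin x) ^ 2.
Proof.
  unfold HS2, ip; rewrite HS_cos_sin; simpl.
  pose proof (cos_sin_sq x); nra.
Qed.

Lemma phi_cos_sin g m1 m2 x : isop_data g m1 m2 -> 0 < x < PI / INR g ->
  phi g m1 m2 (cos x, sin x) * sin (INR g * x) ^ 2 =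
  ndim g m1 m2 * (INR g - 1 + (INR g - 2) * delta g m1 m2 * cos (INR g * x) - delta g m1 m2 ^ 2).
Proof.
  intros Hd Hx; destruct (shape_identities_hold g m1 m2 x Hd Hx) as [_ Hshape].
  pose proof (ndim_pos _ _ _ Hd).
  apply (Rmult_eq_reg_l (ndim g m1 m2)); [| lra].
  unfold phi; rewrite HS2_cos_sin.
  transitivity ((ndim g m1 m2 * normAS2 g m1 m2 (cos x, sin x) - trAS g m1 m2 (cos x, sin x) ^ 2)
    * sin (INR g * x) ^ 2); [field; lra | rewrite Hshape; ring].
Qed.

(* [u = cos (g theta) + delta] satisfies [u' = - g sin (g theta) H = g n u]. *)
Lemma mcf_cos_flow g m1 m2 th : isop_data g m1 m2 -> is_sph_MCF g m1 m2 th ->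
  forall t, t <= 0 ->
  cos (INR g * th t) + delta g m1 m2 =
  (cos (INR g * th 0) + delta g m1 m2) * exp (INR g * ndim g m1 m2 * t).
Proof.
  intros Hd Hm t Ht; rewrite !cos_mul_rot_pow.
  apply (linear_ode_backward (fun s => fst (rot_pow g (cos (th s)) (sin (th s))) + delta g m1 m2)); [| exact Ht].
  intros s Hs; destruct (Hm s Hs) as [Hx [Dc Ds]].
  unfold yof in Dc, Ds; rewrite HS_cos_sin in Dc, Ds; simpl in Dc, Ds.
  destruct (derivable_pt_lim_rot_pow g _ _ s _ Dc Ds) as [Dfst _].
  destruct (shape_identities_hold g m1 m2 (th s) Hd Hx) as [Htr _].
  rewrite cos_mul_rot_pow, sin_mul_rot_pow in Htr.
  eapply derivable_pt_lim_eq, derivable_pt_lim_plus; [| exact Dfst | apply derivable_pt_lim_const].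
  set (T := trAS g m1 m2 _) in *; set (S := snd _) in *.
  cbv beta; transitivity (- INR g * (T * S)); [ring | rewrite Htr; ring].
Qed.

Lemma phi_gap_identity G n d C P :
  P * (1 - C ^ 2) = n * (G - 1 + (G - 2) * d * C - d ^ 2) ->
  (P - (G - 1) * n) * (1 - C ^ 2) = n * ((C + d) * ((G - 1) * (C + d) - G * d)).
Proof. intros H; rewrite Rmult_minus_distr_r, H; ring. Qed.

Lemma phi_pinch G n d u eta eps P :
  1 <= G <= 6 -> 0 < n -> 0 <= d < 1 -> 0 < eps -> - eta <= u <= eta -> eta <= (1 - d) / 2 ->
  11 * eta <= eps * (1 - ((1 + d) / 2) ^ 2) ->
  P * (1 - (u - d) ^ 2) = n * (G - 1 + (G - 2) * d * (u - d) - d ^ 2) ->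
  (G - 1 - eps) * n <= P <= (G - 1 + eps) * n /\
  (u <= 0 \/ d = 0 -> (G - 1) * n <= P) /\
  (0 <= u <= d -> P <= (G - 1) * n).
Proof.
  intros HG Hn Hd Heps Hu Heta Htol HP.
  apply phi_gap_identity in HP; replace (u - d + d) with u in HP by ring.
  set (D := 1 - (u - d) ^ 2) in HP.
  set (gap := u * ((G - 1) * u - G * d)) in HP.
  assert (HD : 1 - ((1 + d) / 2) ^ 2 <= D) by (unfold D; nra).
  assert (HD0 : 0 < 1 - ((1 + d) / 2) ^ 2) by nra.
  assert (Hgap : - (11 * eta) <= gap <= 11 * eta).
  { assert (0 <= (G - 1) * (u * u) <= 5 * eta) by (split; [apply Rmult_le_pos |]; nra).
    assert (0 <= G * d <= 6) by (split; nra).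
    assert (- (6 * eta) <= G * d * u <= 6 * eta) by (split; nra).
    unfold gap; split; nra. }
  split; [| split].
  - assert (eps * (1 - ((1 + d) / 2) ^ 2) <= eps * D) by (apply Rmult_le_compat_l; lra).
    assert (- (eps * D) <= gap <= eps * D) by lra.
    split; nra.
  - intros Hsign; assert (0 <= gap).
    { unfold gap; destruct Hsign as [Hu0 | ->].
      - assert ((G - 1) * u - G * d <= 0) by nra; nra.
      - assert (0 <= (G - 1) * (u * u)) by (apply Rmult_le_pos; nra); nra. }
    assert (0 <= (P - (G - 1) * n) * D) by (rewrite HP; nra).
    nra.
  - intros Hsign; assert (gap <= 0).
    { unfold gap; assert ((G - 1) * u - G * d <= 0) by nra; nra. }
    assert ((P - (G - 1) * n) * D <= 0) by (rewrite HP; nra).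
    nra.
Qed.

Lemma mcf_phi_pinch g m1 m2 th eta eps :
  isop_data g m1 m2 -> is_sph_MCF g m1 m2 th -> 0 < eps ->
  - eta <= cos (INR g * th 0) + delta g m1 m2 <= eta ->
  eta <= (1 - delta g m1 m2) / 2 ->
  11 * eta <= eps * (1 - ((1 + delta g m1 m2) / 2) ^ 2) ->
  forall t, t <= 0 ->
  (cos (INR g * th 0) + delta g m1 m2 <= 0 \/ delta g m1 m2 = 0 ->
     (INR g - 1) * ndim g m1 m2 <= phi g m1 m2 (yof th t) <= (INR g - 1 + eps) * ndim g m1 m2) /\
  (0 <= cos (INR g * th 0) + delta g m1 m2 <= delta g m1 m2 ->
     (INR g - 1 - eps) * ndim g m1 m2 <= phi g m1 m2 (yof th t) <= (INR g - 1) * ndim g m1 m2).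
Proof.
  intros Hd Hm Heps Hu0 Heta Htol t Ht.
  pose proof (isop_data_g_bounds _ _ _ Hd) as HG; pose proof (ndim_pos _ _ _ Hd) as Hn.
  set (d := delta g m1 m2) in *; set (n := ndim g m1 m2) in *.
  set (u0 := cos (INR g * th 0) + d) in *.
  set (E := exp (INR g * n * t)).
  assert (HE : 0 < E <= 1).
  { assert (0 < INR g * n) by nra.
    split; [apply exp_pos | apply exp_le_1]; nra. }
  pose proof (mcf_cos_flow g m1 m2 th Hd Hm t Ht) as Hflow; fold d n u0 E in Hflow.
  destruct (Hm t Ht) as [Hx _].
  pose proof (phi_cos_sin g m1 m2 (th t) Hd Hx) as Hphi; fold d n in Hphi.
  assert (Hsin : sin (INR g * th t) ^ 2 = 1 - (u0 * E - d) ^ 2).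
  { rewrite <- Hflow; pose proof (cos_sin_sq (INR g * th t)); simpl; nra. }
  rewrite Hsin in Hphi.
  replace (cos (INR g * th t)) with (u0 * E - d) in Hphi by lra.
  assert (Hu : - eta <= u0 * E <= eta) by (split; nra).
  destruct (phi_pinch (INR g) n d (u0 * E) eta eps (phi g m1 m2 (yof th t))
    HG Hn (delta_bounds _ _ _ Hd) Heps Hu Heta Htol Hphi) as [Hband [Habove Hbelow]].
  split.
  - intros Hsign; split; [apply Habove; destruct Hsign; [left; nra | now right] | apply Hband].
  - intros Hsign; split; [apply Hband | apply Hbelow; split; nra].
Qed.

Lemma mcf_phi_pinch_near g m1 m2 th thstar c0 eps :
  isop_data g m1 m2 -> is_sph_MCF g m1 m2 th -> 0 < eps ->
  0 < thstar < PI / INR g -> cos (INR g * thstar) = - delta g m1 m2 ->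
  thstar - c0 < th 0 < thstar + c0 ->
  6 * c0 <= (1 - delta g m1 m2) / 2 ->
  66 * c0 <= eps * (1 - ((1 + delta g m1 m2) / 2) ^ 2) ->
  forall t, t <= 0 ->
  (thstar < th 0 \/ delta g m1 m2 = 0 ->
     (INR g - 1) * ndim g m1 m2 <= phi g m1 m2 (yof th t) <= (INR g - 1 + eps) * ndim g m1 m2) /\
  (th 0 < thstar -> 6 * c0 <= delta g m1 m2 ->
     (INR g - 1 - eps) * ndim g m1 m2 <= phi g m1 m2 (yof th t) <= (INR g - 1) * ndim g m1 m2).
Proof.
  intros Hd Hm Heps Hstar Hcos Hth0 Hc0 Htol t Ht.
  pose proof (isop_data_g_bounds _ _ _ Hd) as HG.
  assert (Hg : (0 < g)%nat) by (destruct Hd as [Hg _]; lia).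
  destruct (Hm 0 (Rle_refl 0)) as [Hx0 _].
  pose proof (cos_scaled_close (INR g) thstar (th 0) c0 ltac:(lra) ltac:(apply Rabs_def1; lra)).
  destruct (mcf_phi_pinch g m1 m2 th (6 * c0) eps Hd Hm Heps ltac:(lra) Hc0 ltac:(lra) t Ht)
    as [Habove Hbelow].
  split.
  - intros [Hlt | Hd0]; apply Habove; [left | now right].
    pose proof (cos_scaled_lt g thstar (th 0) Hg Hstar Hx0 Hlt); lra.
  - intros Hlt Hc0d; apply Hbelow.
    pose proof (cos_scaled_lt g (th 0) thstar Hg Hx0 Hstar Hlt); lra.
Qed.

Lemma pinch_tolerance d eps : 0 < d < 1 -> 0 < eps ->
  exists eta, 0 < eta /\ eta <= d /\ eta <= (1 - d) / 2 /\ 11 * eta <= eps * (1 - ((1 + d) / 2) ^ 2).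
Proof.
  intros Hd Heps.
  assert (0 < eps * (1 - ((1 + d) / 2) ^ 2)) by (apply Rmult_lt_0_compat; cbn [pow]; nra).
  exists (Rmin d (Rmin ((1 - d) / 2) (eps * (1 - ((1 + d) / 2) ^ 2) / 11))).
  pose proof (Rmin_l d (Rmin ((1 - d) / 2) (eps * (1 - ((1 + d) / 2) ^ 2) / 11))).
  pose proof (Rmin_r d (Rmin ((1 - d) / 2) (eps * (1 - ((1 + d) / 2) ^ 2) / 11))).
  pose proof (Rmin_l ((1 - d) / 2) (eps * (1 - ((1 + d) / 2) ^ 2) / 11)).
  pose proof (Rmin_r ((1 - d) / 2) (eps * (1 - ((1 + d) / 2) ^ 2) / 11)).
  assert (0 < Rmin d (Rmin ((1 - d) / 2) (eps * (1 - ((1 + d) / 2) ^ 2) / 11)))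
    by (repeat apply Rmin_pos; lra).
  repeat split; lra.
Qed.

Theorem proposition4p17 :
  forall (g m1 m2 : nat) (thmin : R),
    isop_data g m1 m2 ->
    0 < thmin < PI / INR g ->
    cos (INR g * thmin) = - delta g m1 m2 ->
    (delta g m1 m2 = 0 ->
      forall eps, 0 < eps < 1 ->
      exists c0, 0 < c0 /\
        forall th : R -> R, is_sph_MCF g m1 m2 th ->
          PI / (2 * INR g) - c0 < th 0 < PI / (2 * INR g) + c0 ->
          forall t, t <= 0 ->
            (INR g - 1) * ndim g m1 m2 <= phi g m1 m2 (yof th t) <=
            (INR g - 1 + eps) * ndim g m1 m2)
    /\
    (delta g m1 m2 > 0 ->
      forall eps, 0 < eps < 1 ->
      exists c0, 0 < c0 /\
        (forall th : R -> R, is_sph_MCF g m1 m2 th ->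
          thmin - c0 < th 0 < thmin ->
          forall t, t <= 0 ->
            (INR g - 1 - eps) * ndim g m1 m2 <= phi g m1 m2 (yof th t) <=
            (INR g - 1) * ndim g m1 m2) /\
        (forall th : R -> R, is_sph_MCF g m1 m2 th ->
          thmin < th 0 < thmin + c0 ->
          forall t, t <= 0 ->
            (INR g - 1) * ndim g m1 m2 <= phi g m1 m2 (yof th t) <=
            (INR g - 1 + eps) * ndim g m1 m2)).
Proof.
  intros g m1 m2 thmin Hd Hmin Hcos.
  pose proof (isop_data_g_bounds _ _ _ Hd) as HG; pose proof (delta_bounds _ _ _ Hd) as Hdb.
  split.
  - intros Hd0 eps Heps.
    (* [c0 = eps / 88] gives [66 c0 = eps (1 - (1/2)^2)]. *)
    exists (eps / 88); split; [lra |]; intros th Hm Hth0 t Ht.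
    assert (Hstar : 0 < PI / (2 * INR g) < PI / INR g).
    { replace (PI / (2 * INR g)) with (PI / INR g / 2) by (field; lra); lra. }
    assert (Hcos0 : cos (INR g * (PI / (2 * INR g))) = - delta g m1 m2).
    { replace (INR g * (PI / (2 * INR g))) with (PI / 2) by (field; lra); rewrite cos_PI2; lra. }
    refine (proj1 (mcf_phi_pinch_near g m1 m2 th _ (eps / 88) eps Hd Hm _ Hstar Hcos0 Hth0 _ _ t Ht)
      (or_intror Hd0)); rewrite ?Hd0; cbn [pow]; lra.
  - intros Hdpos eps Heps.
    destruct (pinch_tolerance (delta g m1 m2) eps ltac:(lra) ltac:(lra)) as [eta [Heta [Hetad Htol]]].
    exists (eta / 6); split; [lra |]; split; intros th Hm Hth0 t Ht;
      destruct (mcf_phi_pinch_near g m1 m2 th thmin (eta / 6) eps Hd Hm ltac:(lra) Hmin Hcos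
        ltac:(lra) ltac:(lra) ltac:(lra) t Ht) as [Habove Hbelow].
    + apply Hbelow; lra.
    + apply Habove; lra.
Qed.
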